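(* Let $a,b$ be integers such that $q=a^3+5a^2b-8ab^2+b^3$ is a (positive) prime. Then $q\equiv\pm1\pmod 7$; moreover $q\equiv 1\pmod 7$ if and only if $\left(\frac{-7(a^2-ab+b^2)}{q}\right)=1$, and $q\equiv -1\pmod 7$ if and only if $\left(\frac{-7(a^2-ab+b^2)}{q}\right)=-1$.
   Context: $\left(\frac{\cdot}{q}\right)$ denotes the Legendre symbol modulo $q$. *)

From mathcomp Require Import all_boot all_order all_algebra.
Set Implicit Arguments. Unset Strict Implicit. Unset Printing Implicit Defensive.
Import Order.TTheory GRing.Theory Num.Theory.
Local Open Scope ring_scope.

Definition legendre (x : int) (p : nat) : int :=
  if (p%:Z %| x)%Z then 0
  else if [exists y : 'I_p, (p%:Z %| (y%:Z) ^+ 2 - x)%Z] then 1 else -1.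

From mathcomp Require Import all_boot all_order all_algebra fingroup pgroup finfield.
From mathcomp Require Import ring zify.
Set Implicit Arguments. Unset Strict Implicit. Unset Printing Implicit Defensive.
Import GRing.Theory FinRing.Theory.
Local Open Scope ring_scope.

(* Since q^3 cannot divide q, b is a unit mod q and t = a/b is a root in F_q of
   t^3 + 5t^2 - 8t + 1.  This cubic is a Tschirnhaus transform of the cubic
   e^3 + e^2 - 2e - 1 whose roots are the periods w^k + w^-k of a primitive
   7th root of unity w: e = -(t^2 + 8t + 2)/7 is a root of the latter, and
   -7(t^2 - t + 1) = (1 + 6e + 2e^2)^2 (e^2 - 4).  So -7(a^2 - ab + b^2) is a
   square mod q iff e^2 - 4 is, iff z^2 - ez + 1 has a root in F_q, iff F_q
   contains a primitive 7th root of unity, iff q = 1 (mod 7).  Independently,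
   q = (a + 4b)^3 (mod 7) is a nonzero cube, hence q = +-1 (mod 7). *)

Definition cubic_form {R : comPzRingType} (x y : R) :=
  x ^+ 3 + 5 * x ^+ 2 * y - 8 * x * y ^+ 2 + y ^+ 3.

Definition period_cubic {R : comPzRingType} (e : R) := e ^+ 3 + e ^+ 2 - 2 * e - 1.

Definition cyclo7 {R : comPzRingType} (z : R) :=
  z ^+ 6 + z ^+ 5 + z ^+ 4 + z ^+ 3 + z ^+ 2 + z + 1.

Section Periods.

Variable R : comPzRingType.
Implicit Types e w z : R.

Lemma cyclo7_expr7 w : cyclo7 w = 0 -> w ^+ 7 = 1.
Proof.
move=> hw; have -> : w ^+ 7 = (w - 1) * cyclo7 w + 1 by rewrite /cyclo7; ring.
by rewrite hw mulr0 add0r.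
Qed.

Lemma cyclo7_of_period_cubic e z :
  period_cubic e = 0 -> z ^+ 2 - e * z + 1 = 0 -> cyclo7 z = 0.
Proof.
move=> he hz.
have -> : cyclo7 z = z ^+ 3 * period_cubic e + (z ^+ 2 - e * z + 1) *
  (z ^+ 4 + z ^+ 3 * e + z ^+ 3 + z ^+ 2 * e ^+ 2 + z ^+ 2 * e + z * e + z + 1).
  by rewrite /cyclo7 /period_cubic; ring.
by rewrite he hz !(mulr0, mul0r, addr0).
Qed.

Lemma period_cubic_factor w x : cyclo7 w = 0 ->
  period_cubic x = (x - (w + w ^+ 6)) * (x - (w ^+ 2 + w ^+ 5)) * (x - (w ^+ 3 + w ^+ 4)).
Proof.
move=> hw; have w7 := cyclo7_expr7 hw.
have w6 : w ^+ 6 = - (w ^+ 5 + w ^+ 4 + w ^+ 3 + w ^+ 2 + w + 1).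
  by apply/eqP; rewrite -subr_eq0 opprK -hw /cyclo7 !addrA.
rewrite /period_cubic; ring: w7 w6.
Qed.

End Periods.

Section QuadraticRoots.

Variable F : fieldType.
Implicit Types c e s w x z : F.

Lemma period_quadratic_root w e :
  cyclo7 w = 0 -> period_cubic e = 0 -> exists z, z ^+ 2 - e * z + 1 = 0.
Proof.
move=> hw; have w7 : w ^+ 7 = 1 by exact: cyclo7_expr7.
rewrite (period_cubic_factor e hw) => /eqP; rewrite !mulf_eq0 !subr_eq0 -!orbA.
case/or3P=> /eqP->; [exists w | exists (w ^+ 2) | exists (w ^+ 3)]; ring: w7.
Qed.

Lemma quadratic_root_sqr e : (2 : F) != 0 ->
  (exists z, z ^+ 2 - e * z + 1 = 0) <-> exists s, s ^+ 2 = e ^+ 2 - 4.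
Proof.
move=> h2; split=> [[z hz] | [s hs]].
  have {}hz : z ^+ 2 = e * z - 1 by apply/eqP; rewrite -subr_eq0 -hz; apply/eqP; ring.
  by exists (2 * z - e); ring: hz.
by exists ((e + s) / 2); field: hs.
Qed.

Lemma sqr_scale c x :
  c != 0 -> (exists s, s ^+ 2 = c ^+ 2 * x) <-> exists s, s ^+ 2 = x.
Proof.
move=> c0; split=> [[s hs] | [s hs]]; last by exists (c * s); rewrite exprMn hs.
by exists (s / c); field: hs.
Qed.

End QuadraticRoots.

Section CubicRoot.

Variables (F : fieldType) (t : F).
Hypotheses (h2 : (2 : F) != 0) (h7 : (7 : F) != 0) (ht : cubic_form t 1 = 0).

Let ht3 : t ^+ 3 = - (5 * t ^+ 2 - 8 * t + 1).
Proof. by apply/eqP; rewrite -subr_eq0 opprK -ht /cubic_form; apply/eqP; ring. Qed.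

Let e := (- 2 - 8 * t - t ^+ 2) / 7.

Lemma cubic_root_period : period_cubic e = 0.
Proof. by rewrite /period_cubic /e; field: ht3. Qed.

Lemma cubic_root_norm :
  -7 * (t ^+ 2 - t + 1) = (1 + 6 * e + 2 * e ^+ 2) ^+ 2 * (e ^+ 2 - 4).
Proof. by rewrite /e; field: ht3. Qed.

Lemma cubic_root_norm_neq0 : t ^+ 2 - t + 1 != 0.
Proof.
apply: contra_neq (mulf_neq0 h7 h7) => hD.
have -> : (7 * 7 : F) = (3 * t - 8) * cubic_form t 1 + (57 - 10 * t - 3 * t ^+ 2) * (t ^+ 2 - t + 1).
  by rewrite /cubic_form; ring.
by rewrite ht hD !mulr0 addr0.
Qed.

Lemma cubic_root_sqr_iff :
  (exists s, s ^+ 2 = -7 * (t ^+ 2 - t + 1)) <-> exists w : F, cyclo7 w = 0.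
Proof.
have hr : 1 + 6 * e + 2 * e ^+ 2 != 0.
  have : -7 * (t ^+ 2 - t + 1) != 0 by rewrite mulf_neq0 ?oppr_eq0 ?cubic_root_norm_neq0.
  by apply: contra_neq => r0; rewrite cubic_root_norm r0 expr2 !mul0r.
rewrite cubic_root_norm sqr_scale // -quadratic_root_sqr //.
split=> [[z hz] | [w hw]]; first by exists z; exact: cyclo7_of_period_cubic cubic_root_period hz.
exact: period_quadratic_root hw cubic_root_period.
Qed.

End CubicRoot.

Lemma finField_cyclo7_root_iff (F : finFieldType) :
  (7 : F) != 0 -> (exists w : F, cyclo7 w = 0) <-> (7 %| #|F|.-1)%N.
Proof.
move=> h7; split=> [[w hw] | h7F].
  have w7 := cyclo7_expr7 hw.
  have w1 : w != 1 by apply: contra_neq h7 => w1; rewrite -hw w1 /cyclo7; ring.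
  have w0 : w != 0 by apply: contra_eq_neq w7 => ->; rewrite expr0n eq_sym oner_neq0.
  have [m prim_w m7] := prim_order_exists (isT : 0 < 7)%N w7.
  have /primeP[_ /(_ m m7) /orP[] /eqP m_eq] := (isT : prime 7); subst m.
    by move: w1; rewrite -[w]expr1 prim_expr_order ?eqxx.
  rewrite (prim_order_dvd prim_w); apply/eqP; apply: (mulIf w0).
  by rewrite mul1r -exprSr prednK ?expf_card // (ltnW (finNzRing_gt1 F)).
rewrite -card_finField_unit in h7F.
have [u _ ord_u] := Cauchy (isT : prime 7) h7F.
have u7 : val u ^+ 7 = 1 by rewrite -val_unitX -ord_u expg_order.
have u1 : val u != 1.
  by apply: contra_eq_neq ord_u => u1; rewrite (_ : u = 1%g) ?order1 //; exact: val_inj.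
exists (val u).
have : (val u - 1) * cyclo7 (val u) = val u ^+ 7 - 1 by rewrite /cyclo7; ring.
by rewrite u7 subrr => /eqP; rewrite mulf_eq0 subr_eq0 (negbTE u1) => /eqP.
Qed.

Lemma legendreE (x : int) (q : nat) : prime q -> ~~ (q%:Z %| x)%Z ->
  legendre x q = if [exists s : 'F_q, s ^+ 2 == x%:~R] then 1 else -1.
Proof.
move=> qpr qx; have pc := pchar_Fp qpr.
rewrite /legendre (negbTE qx); congr (if _ then _ else _).
apply/existsP/existsP => [[y hy] | [s hs]].
  by exists y%:R; move: hy; rewrite (dvdz_pcharf pc) rmorphB rmorphXn subr_eq0.
exists (cast_ord (Fp_cast qpr) s).
rewrite (dvdz_pcharf pc) rmorphB rmorphXn /= subr_eq0.
have -> : (nat_of_ord (cast_ord (Fp_cast qpr) s))%:Z%:~R = s :> 'F_q by exact: natr_Zp.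
exact: hs.
Qed.

Lemma intr_cubic_form (R : comNzRingType) (x y : int) :
  (cubic_form x y)%:~R = cubic_form (x%:~R : R) y%:~R.
Proof. by rewrite /cubic_form !(rmorphD, rmorphB, rmorphM, rmorphXn, rmorph1) /=; ring. Qed.

Lemma int_cube_mod7 (c : int) :
  (7 %| c)%Z \/ exists k, c ^+ 3 = 7 * k + 1 \/ c ^+ 3 = 7 * k - 1.
Proof.
have hc := divz_eq c 7; set m := (c %/ 7)%Z in hc; set r := (c %% 7)%Z in hc.
have r_range : 0 <= r < 7 by rewrite modz_ge0 // ltz_pmod.
have [K hK] : exists K, c ^+ 3 = 7 * K + r ^+ 3.
  by exists (49 * m ^+ 3 + 21 * m ^+ 2 * r + 3 * m * r ^+ 2); rewrite hc; ring.
have : r = 0 \/ r = 1 \/ r = 2 \/ r = 3 \/ r = 4 \/ r = 5 \/ r = 6 by lia.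
case=> [r0|hr]; first by left; apply/dvdzP; exists m; rewrite hc r0 addr0.
right; move: hK; case: hr => [->|[->|[->|[->|[->|->]]]]] hK.
- by exists K; left; rewrite hK.
- by exists (K + 1); left; rewrite hK; ring.
- by exists (K + 4); right; rewrite hK; ring.
- by exists (K + 9); left; rewrite hK; ring.
- by exists (K + 18); right; rewrite hK; ring.
- by exists (K + 31); right; rewrite hK; ring.
Qed.

Lemma prime_cubic_form_mod7 (a b : int) (q : nat) :
  prime q -> q%:Z = cubic_form a b -> (q %% 7 = 1)%N \/ (q %% 7 = 6)%N.
Proof.
move=> qpr hq.
have {}hq : q%:Z = (a + 4 * b) ^+ 3 - 7 * b * (a + 4 * b) ^+ 2 + 49 * b ^+ 3.
  by rewrite hq /cubic_form; ring.
case: (int_cube_mod7 (a + 4 * b)) => [/dvdzP[m hm] | [k [hk | hk]]].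
- have [X hX] : exists X, q%:Z = 49 * X.
    by exists (7 * m ^+ 3 - 7 * b * m ^+ 2 + b ^+ 3); rewrite hq hm; ring.
  have q7 : 7%N = q by apply/(prime_nt_dvdP qpr) => //; lia.
  lia.
- have : q%:Z = 7 * (k - b * (a + 4 * b) ^+ 2 + 7 * b ^+ 3) + 1 by rewrite hq hk; ring.
  lia.
- have : q%:Z = 7 * (k - b * (a + 4 * b) ^+ 2 + 7 * b ^+ 3) - 1 by rewrite hq hk; ring.
  lia.
Qed.

Lemma prime_cubic_form_ndvd (a b : int) (q : nat) :
  prime q -> q%:Z = cubic_form a b -> ~~ (q%:Z %| b)%Z.
Proof.
move=> qpr hq; apply/negP => qb; have pc := pchar_Fp qpr.
have qa : (q%:Z %| a)%Z.
  move: qb; rewrite !(dvdz_pcharf pc) => /eqP b0.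
  have : (q%:Z)%:~R = 0 :> 'F_q by exact: pchar_Fp_0.
  rewrite hq intr_cubic_form /cubic_form b0 => /eqP.
  by rewrite (_ : _ + _ = a%:~R ^+ 3); [rewrite expf_eq0 | ring].
have [a1 ha] := dvdzP qa; have [b1 hb] := dvdzP qb.
have : (q%:Z ^+ 3 %| q%:Z)%Z.
  by apply/dvdzP; exists (cubic_form a1 b1); rewrite {1}hq ha hb /cubic_form; ring.
rewrite -!natz -natrX natz => /(dvdn_leq (prime_gt0 qpr)).
have := prime_gt1 qpr; nia.
Qed.

Lemma prime_cubic_form_sqr_iff (a b : int) (q : nat) :
  prime q -> q%:Z = cubic_form a b ->
  ~~ (q%:Z %| -7 * (a ^+ 2 - a * b + b ^+ 2))%Z /\
  ((exists s : 'F_q, s ^+ 2 = (-7 * (a ^+ 2 - a * b + b ^+ 2))%:~R) <-> (q %% 7 = 1)%N).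
Proof.
move=> qpr hq; have pc := pchar_Fp qpr.
have q_gt7 : (7 < q)%N.
  rewrite ltnNge; apply/negP => q_le7.
  have : q = 1%N \/ q = 6%N by case: (prime_cubic_form_mod7 qpr hq); lia.
  by case=> q_eq; rewrite q_eq in qpr.
have nat_neq0 n : (0 < n < q)%N -> n%:R != 0 :> 'F_q.
  by case/andP=> n_gt0 n_ltq; rewrite -(dvdn_pcharf pc) gtnNdvd.
have h2 : 2 != 0 :> 'F_q by apply: nat_neq0; lia.
have h7 : 7 != 0 :> 'F_q by apply: nat_neq0; lia.
set al := a%:~R : 'F_q; set be := b%:~R : 'F_q.
have hb : be != 0 by rewrite -(dvdz_pcharf pc) (prime_cubic_form_ndvd qpr hq).
have ht : cubic_form (al / be) 1 = 0.
  have hf : cubic_form al be = 0 by rewrite -intr_cubic_form -hq; exact: pchar_Fp_0.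
  have : be ^+ 3 * cubic_form (al / be) 1 = 0 by rewrite -hf /cubic_form; field.
  by move/eqP; rewrite mulf_eq0 expf_eq0 (negbTE hb) andbF => /eqP.
have hx : (-7 * (a ^+ 2 - a * b + b ^+ 2))%:~R = be ^+ 2 * (-7 * ((al / be) ^+ 2 - al / be + 1)).
  by rewrite !(rmorphD, rmorphB, rmorphM, rmorphXn, rmorphN, rmorph1) /=; field.
split.
  by rewrite (dvdz_pcharf pc) hx !mulf_neq0 ?expf_neq0 ?oppr_eq0 ?cubic_root_norm_neq0.
rewrite hx sqr_scale // cubic_root_sqr_iff // finField_cyclo7_root_iff // card_Fp //.
by have := prime_gt0 qpr; split; lia.
Qed.

Theorem lemma6p4 (a b : int) (q : nat) :
  prime q ->
  q%:Z = a ^+ 3 + 5 * a ^+ 2 * b - 8 * a * b ^+ 2 + b ^+ 3 ->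
  [/\ (q %% 7 = 1)%N \/ (q %% 7 = 6)%N,
      (q %% 7 = 1)%N <-> legendre (- 7 * (a ^+ 2 - a * b + b ^+ 2)) q = 1
    & (q %% 7 = 6)%N <-> legendre (- 7 * (a ^+ 2 - a * b + b ^+ 2)) q = -1].
Proof.
move=> qpr hq.
have q_mod7 := prime_cubic_form_mod7 qpr hq.
have [q_ndvd sqr_iff] := prime_cubic_form_sqr_iff qpr hq.
rewrite legendreE //.
by case: exists_eqP => [/sqr_iff | /(contra_not sqr_iff.2)] q1; split=> //; split=> h; lia.
Qed.
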